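(* Let $c\in\mathbb{N}$ be a constant and let $g=(g_n)_{n\in\mathbb{N}}$, $g_n:\{0,1\}^n\to\{0,1\}^{n+c}$, be a generator. Suppose there exist a polynomial $p$, a constant $\epsilon>0$, and a strictly increasing infinite sequence $(n_i)_{i\in\mathbb{N}}\subseteq\mathbb{N}$ such that (1) $n_{i+1}\le p(n_i)$ for all $i$, and (2) for every $n\in\{n_i: i\in\mathbb{N}\}$, $H_{\mathrm{nh}}(g_n)\ge 2^{n^\epsilon}$ (respectively, $H_{\mathrm{dh}}(g_n)\ge 2^{n^\epsilon}$). Then there exists a generator $G_n:\{0,1\}^n\to\{0,1\}^{n+c}$ constructed from $g$ which is $c$ super-bits (respectively, $c$ demi-bits). Concretely, one may take $G(x)=g_{n_i}(x[1\ldots n_i])\cdot x[n_i+1\ldots n]$ for $x\in\{0,1\}^n$ with $n_i\le n<n_{i+1}$ (for $n\ge n_1$).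
   Context: A generator is a family $g_n:\{0,1\}^n\to\{0,1\}^{l(n)}$ computable by polynomial-size (nonuniform) circuits with $l(n)>n$. A nondeterministic circuit $D(x,w)$ accepts input $x$ (written $D(x)=1$) iff there is an assignment to the nondeterministic input bits $w$ with $D(x,w)=1$. The nondeterministic hardness $H_{\mathrm{nh}}(g_n)$ is the minimal $s$ such that some nondeterministic circuit $D$ of size at most $s$ satisfies $\Pr_{y\in\{0,1\}^{l(n)}}[D(y)=1]-\Pr_{x\in\{0,1\}^n}[D(g_n(x))=1]\ge 1/s$. The demi-hardness $H_{\mathrm{dh}}(g_n)$ is the minimal $s$ such that some nondeterministic circuit $D$ of size at most $s$ satisfies $\Pr_{y}[D(y)=1]\ge 1/s$ and $\Pr_x[D(g_n(x))=1]=0$. A generator $g_n:\{0,1\}^n\to\{0,1\}^{n+c}$ is $c$ super-bits (resp. $c$ demi-bits) if there is $\epsilon>0$ such that $H_{\mathrm{nh}}(g_n)\ge 2^{n^\epsilon}$ (resp. $H_{\mathrm{dh}}(g_n)\ge 2^{n^\epsilon}$) for all sufficiently large $n$. Probabilities are over the uniform distribution. $x[i\ldots j]$ denotes the substring of $x$ from position $i$ to $j$, and $\cdot$ denotes concatenation. *)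

From mathcomp Require Import all_boot.
From Stdlib Require Import Reals.

Set Implicit Arguments.
Unset Strict Implicit.
Unset Printing Implicit Defensive.

(* Wires are numbered: first the inputs, then the gates in order.      *)
(* A gate argument referring to a non-existent wire reads [false]      *)
(* (i.e. the constant 0 is freely available).                          *)
Inductive gate : Type :=
| GAnd of nat & nat
| GOr of nat & nat
| GNot of nat.

Definition eval_gate (vals : seq bool) (gt : gate) : bool :=
  match gt with
  | GAnd i j => nth false vals i && nth false vals j
  | GOr i j => nth false vals i || nth false vals j
  | GNot i => ~~ nth false vals i
  end.

Definition eval_wires (gs : seq gate) (inp : seq bool) : seq bool :=
  foldl (fun vals gt => rcons vals (eval_gate vals gt)) inp gs.

Record mcircuit := MCircuit { mc_gates : seq gate; mc_outs : seq nat }.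
Definition mc_size (C : mcircuit) : nat := size (mc_gates C).
Definition mc_eval (C : mcircuit) (inp : seq bool) : seq bool :=
  map (nth false (eval_wires (mc_gates C) inp)) (mc_outs C).

(* nondeterministic (single-output) circuit D(x,w): inputs are x followed
   by nd_nw nondeterministic bits w; output wire nd_out. *)
Record ndcircuit := NDCircuit { nd_nw : nat; nd_gates : seq gate; nd_out : nat }.
Definition nd_size (D : ndcircuit) : nat := size (nd_gates D).
Definition nd_accepts (D : ndcircuit) (x : seq bool) : bool :=
  [exists w : (nd_nw D).-tuple bool,
     nth false (eval_wires (nd_gates D) (x ++ w)) (nd_out D)].

(* Polynomials (natural coefficients; any polynomial bound on naturals *)
(* is dominated by one of these).                                      *)
Definition peval (p : seq nat) (n : nat) : nat :=
  \sum_(i < size p) nth 0 p i * n ^ i.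

Definition genfam (l : nat -> nat) : Type :=
  forall n : nat, n.-tuple bool -> (l n).-tuple bool.

Definition is_generator (l : nat -> nat) (g : genfam l) : Prop :=
  (forall n, n < l n) /\
  exists p : seq nat, forall n, exists C : mcircuit,
    mc_size C <= peval p n /\ forall x : n.-tuple bool, mc_eval C x = val (g n x).

Definition prob (m : nat) (P : pred (m.-tuple bool)) : R :=
  (INR #|[set y | P y]| / 2 ^ m)%R.

Definition Pr_rand (m : nat) (D : ndcircuit) : R :=
  prob (fun y : m.-tuple bool => nd_accepts D y).
Definition Pr_gen (l : nat -> nat) (g : genfam l) (n : nat) (D : ndcircuit) : R :=
  prob (fun x : n.-tuple bool => nd_accepts D (g n x)).

(* H_nh(g_n) >= T : every positive s for which some nondeterministic
   circuit of size <= s has distinguishing advantage >= 1/s satisfies T <= s *)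
Definition nh_hard_ge (l : nat -> nat) (g : genfam l) (n : nat) (T : R) : Prop :=
  forall (s : nat) (D : ndcircuit), 0 < s -> nd_size D <= s ->
    (/ INR s <= Pr_rand (l n) D - Pr_gen g n D)%R -> (T <= INR s)%R.

Definition dh_hard_ge (l : nat -> nat) (g : genfam l) (n : nat) (T : R) : Prop :=
  forall (s : nat) (D : ndcircuit), 0 < s -> nd_size D <= s ->
    (/ INR s <= Pr_rand (l n) D)%R -> Pr_gen g n D = 0%R -> (T <= INR s)%R.

Definition expbound (eps : R) (n : nat) : R := Rpower 2 (Rpower (INR n) eps).

Definition super_bits (l : nat -> nat) (g : genfam l) : Prop :=
  exists eps : R, (0 < eps)%R /\ exists N, forall n, N <= n -> nh_hard_ge g n (expbound eps n).

Definition demi_bits (l : nat -> nat) (g : genfam l) : Prop :=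
  exists eps : R, (0 < eps)%R /\ exists N, forall n, N <= n -> dh_hard_ge g n (expbound eps n).

(* x[1..m] as an m-tuple (padded with false if m > n; only used for m <= n) *)
Definition prefix_tuple (m n : nat) (x : n.-tuple bool) : m.-tuple bool :=
  [tuple nth false x i | i < m].

From mathcomp Require Import all_boot.
From Stdlib Require Import Reals Lra Psatz.
(* Reals shadows ssrnat's [^] on [nat]; restore it. *)
Import ssrnat.

Set Implicit Arguments.
Unset Strict Implicit.
Unset Printing Implicit Defensive.

(** A (nondeterministic) distinguisher [D] of
   size [s] for [G_n] yields one for [g_m], [m = ns i]: by averaging over
   the suffix [z], some [D(. ++ z)] has at least the same advantage, and
   it is realised by a circuit of size [s + 2(n - m) + 1] that guesses [z]
   nondeterministically and checks it; the one-sided condition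
   [Pr[D(G(x))] = 0] of demi-hardness is preserved as well.  Since
   [n < p(m)], the hardness [2^(m^eps)] of [g_m] then gives [G_n] hardness
   [2^(n^eps')] with [eps' = eps / (2 (deg p + 1))]. *)

Lemma eval_wires_cat (gs1 gs2 : seq gate) (inp : seq bool) :
  eval_wires (gs1 ++ gs2) inp = eval_wires gs2 (eval_wires gs1 inp).
Proof. by rewrite /eval_wires foldl_cat. Qed.

Lemma size_eval_wires (gs : seq gate) (inp : seq bool) :
  size (eval_wires gs inp) = size inp + size gs.
Proof.
elim: gs inp => [|gt gs IH] inp /=; first by rewrite addn0.
by rewrite IH size_rcons addSnnS.
Qed.

Lemma nth_eval_wires (gs : seq gate) (inp : seq bool) (i : nat) :
  i < size inp -> nth false (eval_wires gs inp) i = nth false inp i.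
Proof.
elim: gs inp => [|gt gs IH] inp //= Hi.
by rewrite IH ?nth_rcons ?Hi // size_rcons ltnW.
Qed.

(** If [k] fresh wires are inserted after the first [m] inputs, renumbering
   every wire reference by [shift_wire m k] leaves all computed values
   unchanged.  This lets a circuit for [g_m] run on the first [m] bits of
   a longer input. *)

Definition shift_wire (m k i : nat) : nat := if i < m then i else i + k.

Definition shift_gate (m k : nat) (gt : gate) : gate :=
  match gt with
  | GAnd i j => GAnd (shift_wire m k i) (shift_wire m k j)
  | GOr i j => GOr (shift_wire m k i) (shift_wire m k j)
  | GNot i => GNot (shift_wire m k i)
  end.

Lemma eval_shifted_gates (m k : nat) (gs : seq gate) (vals vals' : seq bool) :
  m <= size vals -> size vals' = size vals + k ->
  (forall i, nth false vals' (shift_wire m k i) = nth false vals i) ->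
  forall i, nth false (eval_wires (map (shift_gate m k) gs) vals') (shift_wire m k i) =
            nth false (eval_wires gs vals) i.
Proof.
elim: gs vals vals' => [|gt gs IH] vals vals' Hm Hs H //=.
apply: IH; rewrite ?size_rcons ?Hs ?(leqW Hm) //.
have Hgate : eval_gate vals' (shift_gate m k gt) = eval_gate vals gt.
  by case: gt => [a b|a b|a] /=; rewrite ?H.
move=> i; rewrite !nth_rcons.
have [Hi|Hi] := ltnP i (size vals).
  have Hr : shift_wire m k i < size vals'.
    by rewrite /shift_wire Hs; case: ifP => _; [apply: ltn_addr|rewrite ltn_add2r].
  by rewrite Hr -H.
have -> : shift_wire m k i = i + k by rewrite /shift_wire ifN // -leqNgt (leq_trans Hm Hi).
rewrite Hs ltn_add2r eqn_add2r Hgate.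
by case: ltngtP Hi.
Qed.

Lemma map_nth_iota (s : seq bool) (m : nat) :
  map (nth false s) (iota m (size s - m)) = drop m s.
Proof.
apply: (@eq_from_nth _ false); first by rewrite size_map size_iota size_drop.
move=> j; rewrite size_map size_iota => Hj.
by rewrite (nth_map 0) ?size_iota // nth_iota // nth_drop.
Qed.

(* Outputting the input followed by [c] zeros needs no gate (missing
   wires read [false]). *)
Lemma padding_circuit (n c : nat) :
  exists C : mcircuit, mc_size C = 0 /\
    forall x : n.-tuple bool, mc_eval C x = val x ++ nseq c false.
Proof.
exists (MCircuit [::] (iota 0 n ++ nseq c n)); split => // x.
rewrite /mc_eval /= map_cat map_nseq nth_default ?size_tuple //.
by have := map_nth_iota x 0; rewrite drop0 subn0 size_tuple => ->.
Qed.

Lemma nth_prefix_tuple (m n : nat) (x : n.-tuple bool) (i : nat) :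
  nth false (prefix_tuple m x) i = if i < m then nth false x i else false.
Proof.
case: ifP => Hi; first by rewrite -[i]/(nat_of_ord (Ordinal Hi)) -tnth_nth tnth_mktuple.
by rewrite nth_default // size_tuple leqNgt Hi.
Qed.

Lemma prefix_circuit (C : mcircuit) (m n : nat) : m <= n ->
  exists C' : mcircuit, mc_size C' = mc_size C /\
    forall x : n.-tuple bool, mc_eval C' x = mc_eval C (prefix_tuple m x) ++ drop m x.
Proof.
move=> m_le_n; set k := n - m.
exists (MCircuit (map (shift_gate m k) (mc_gates C))
                 (map (shift_wire m k) (mc_outs C) ++ iota m k)).
split=> [|x]; first by rewrite /mc_size size_map.
rewrite /mc_eval /= map_cat -map_comp; congr (_ ++ _).
  apply: eq_map => i /=; apply: eval_shifted_gates; rewrite ?size_tuple ?card_ord ?subnKC //.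
  move=> j; rewrite nth_prefix_tuple /shift_wire; case: ifP => // /negbT.
  by rewrite -leqNgt => Hj; rewrite nth_default // size_tuple -(subnKC m_le_n) leq_add2r.
have := map_nth_iota x m; rewrite size_tuple => <-; apply/eq_in_map => j.
by rewrite mem_iota subnKC // => /andP [_ Hj]; rewrite nth_eval_wires // size_tuple.
Qed.

(** * Checking that wires carry prescribed values

   [check_gates W a zs] is a chain of gates, appended to a circuit whose
   wires are numbered below [W], computing the conjunction of wire [a] and
   of the tests "wire q carries b" for (q, b) in [zs]; the result is on
   wire [check_out W a zs]. *)

Fixpoint check_gates (W a : nat) (zs : seq (nat * bool)) : seq gate :=
  match zs with
  | [::] => [::]
  | (q, true) :: zs' => GAnd a q :: check_gates W.+1 W zs'
  | (q, false) :: zs' => GNot q :: GAnd a W :: check_gates W.+2 W.+1 zs'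
  end.

Fixpoint check_out (W a : nat) (zs : seq (nat * bool)) : nat :=
  match zs with
  | [::] => a
  | (q, true) :: zs' => check_out W.+1 W zs'
  | (q, false) :: zs' => check_out W.+2 W.+1 zs'
  end.

Lemma size_check_gates (W a : nat) (zs : seq (nat * bool)) :
  size (check_gates W a zs) <= 2 * size zs.
Proof.
elim: zs W a => [|[q []] zs IH] W a //=; rewrite mulnS.
  exact: leq_trans (IH _ _) (leqW (leqnn _)).
by rewrite !ltnS IH.
Qed.

Lemma check_gates_eval (W a : nat) (zs : seq (nat * bool)) (vals : seq bool) :
  size vals = W -> a < W -> all (fun qb => qb.1 < W) zs ->
  nth false (eval_wires (check_gates W a zs) vals) (check_out W a zs) =
  nth false vals a && all (fun qb => nth false vals qb.1 == qb.2) zs.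
Proof.
elim: zs W a vals => [|[q b] zs IH] W a vals Hs Ha /=; first by rewrite andbT.
move=> /andP [Hq Hall].
have Hold (v : seq bool) (x : bool) j :
    size v = W -> j < W -> nth false (rcons v x) j = nth false v j.
  by move=> Hv Hj; rewrite nth_rcons Hv Hj.
case: b => /=.
  rewrite IH ?size_rcons ?Hs //; last by apply/allP => qb /(allP Hall) /ltnW.
  rewrite nth_rcons Hs ltnn eqxx eqb_id -andbA; congr (_ && (_ && _)).
  by apply: eq_in_all => qb /(allP Hall) Hqb; rewrite Hold.
rewrite IH ?size_rcons ?Hs //; last first.
  by apply/allP => qb /(allP Hall) Hqb; rewrite (leq_trans Hqb) ?leqW.
rewrite nth_rcons size_rcons Hs ltnn eqxx /= nth_rcons Hs Ha nth_rcons Hs ltnn eqxx.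
rewrite -andbA eqbF_neg; congr (_ && (_ && _)).
apply: eq_in_all => qb /(allP Hall) Hqb.
by rewrite !nth_rcons size_rcons Hs Hqb ltnS (ltnW Hqb).
Qed.

(** * Hard-wiring a suffix into a nondeterministic circuit

   It guesses the bits of [z] nondeterministically together with the
   witness of [D]: on input [y ++ z' ++ w], [D]'s own gates see
   [(y ++ z') ++ w]; its output is copied to a fresh wire and then
   conjoined with the test [z' = z]. *)

Definition fix_suffix (D : ndcircuit) (m : nat) (z : seq bool) : ndcircuit :=
  let W := m + size z + nd_nw D + size (nd_gates D) in
  let zs := [seq (m + j, nth false z j) | j <- iota 0 (size z)] in
  NDCircuit (size z + nd_nw D)
            (nd_gates D ++ GAnd (nd_out D) (nd_out D) :: check_gates W.+1 W zs)
            (check_out W.+1 W zs).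

Lemma fix_suffix_size (D : ndcircuit) (m : nat) (z : seq bool) :
  nd_size (fix_suffix D m z) <= nd_size D + (2 * size z).+1.
Proof.
rewrite /nd_size /= size_cat /= leq_add2l ltnS.
by apply: leq_trans (size_check_gates _ _ _) _; rewrite size_map size_iota.
Qed.

Lemma take_eq_nth (w z : seq bool) :
  size z <= size w ->
  (take (size z) w == z) = all (fun j => nth false w j == nth false z j) (iota 0 (size z)).
Proof.
move=> Hw; apply/eqP/allP => [Hz j|H].
  by rewrite mem_iota add0n => /andP [_ Hj]; rewrite -{1}Hz nth_take.
apply: (@eq_from_nth _ false); rewrite size_takel // => j Hj.
by rewrite nth_take //; apply/eqP/H; rewrite mem_iota add0n.
Qed.

(* The output of [fix_suffix D m z] on [y ++ w'], where [w'] is the guessed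
   suffix followed by a witness of [D]. *)
Lemma fix_suffix_output (D : ndcircuit) (m : nat) (z y w' : seq bool) :
  size y = m -> size w' = size z + nd_nw D ->
  nth false (eval_wires (nd_gates (fix_suffix D m z)) (y ++ w')) (nd_out (fix_suffix D m z)) =
  nth false (eval_wires (nd_gates D) (y ++ w')) (nd_out D) && (take (size z) w' == z).
Proof.
move=> Hy Hw.
set E := eval_wires (nd_gates D) (y ++ w').
have HE : size E = m + size z + nd_nw D + size (nd_gates D).
  by rewrite /E size_eval_wires size_cat Hy Hw !addnA.
have Hlt j : j < size z -> m + j < size E.
  by move=> Hj; rewrite HE -!addnA ltn_add2l (leq_trans Hj) ?leq_addr.
rewrite /= eval_wires_cat /= -/E check_gates_eval ?size_rcons ?HE //; last first.
  apply/allP => qb /mapP [j]; rewrite mem_iota add0n => /andP [_ Hj] -> /=.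
  by rewrite -HE ltnS ltnW ?Hlt.
rewrite nth_rcons HE ltnn eqxx andbb take_eq_nth ?Hw ?leq_addr // all_map.
congr (_ && _); apply: eq_in_all => j; rewrite mem_iota add0n => /andP [_ Hj] /=.
rewrite nth_rcons Hlt // /E nth_eval_wires; last first.
  by rewrite size_cat Hy Hw ltn_add2l (leq_trans Hj) ?leq_addr.
by rewrite nth_cat Hy ltnNge leq_addr /= addKn.
Qed.

Lemma fix_suffix_accepts (D : ndcircuit) (m : nat) (z y : seq bool) :
  size y = m -> nd_accepts (fix_suffix D m z) y = nd_accepts D (y ++ z).
Proof.
move=> Hy; apply/existsP/existsP => [[w']|[w Hw]].
  rewrite fix_suffix_output ?size_tuple // => /andP [Hacc /eqP Hz].
  have Hd : size (drop (size z) w') == nd_nw D by rewrite size_drop size_tuple addKn.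
  exists (Tuple Hd) => /=.
  by rewrite -catA -[in X in _ ++ (X ++ _)]Hz cat_take_drop.
exists (cat_tuple (in_tuple z) w).
by rewrite fix_suffix_output ?size_tuple //= ?size_cat ?size_tuple // take_size_cat // catA Hw eqxx.
Qed.

(** Probabilities are ratios of acceptance counts; the reduction below is
   an averaging argument on these natural-number counts. *)

Definition count_rand (N : nat) (D : ndcircuit) : nat :=
  \sum_(y : N.-tuple bool) nd_accepts D y.

Definition count_gen (l : nat -> nat) (g : genfam l) (m : nat) (D : ndcircuit) : nat :=
  \sum_(x : m.-tuple bool) nd_accepts D (g m x).

Lemma prob_count (N : nat) (P : pred (N.-tuple bool)) :
  prob P = (INR (\sum_(y : N.-tuple bool) P y) / 2 ^ N)%R.
Proof.
rewrite /prob -sum1_card big_mkcond /=; do 2 f_equal.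
by apply: eq_bigr => y _; rewrite inE; case: (P y).
Qed.

Definition seq_prefix (N : nat) (s : seq bool) : N.-tuple bool :=
  [tuple nth false s j | j < N].

Lemma val_seq_prefix (N : nat) (s : seq bool) : size s = N -> val (seq_prefix N s) = s.
Proof.
move=> Hs; apply: (@eq_from_nth _ false); rewrite size_tuple // => j Hj.
by rewrite -[j]/(nat_of_ord (Ordinal Hj)) -tnth_nth tnth_mktuple.
Qed.

Lemma seq_prefix_cat (m : nat) (x1 : m.-tuple bool) (z : seq bool) :
  seq_prefix m (x1 ++ z) = x1.
Proof.
apply: eq_from_tnth => j.
by rewrite tnth_mktuple (tnth_nth false) nth_cat size_tuple ltn_ord.
Qed.

Lemma sum_cat_tuple (N1 N2 : nat) (F : seq bool -> nat) :
  \sum_(t : (N1 + N2).-tuple bool) F t =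
  \sum_(z : N2.-tuple bool) \sum_(t1 : N1.-tuple bool) F (t1 ++ z).
Proof.
rewrite pair_bigA /=.
pose h (p : N2.-tuple bool * N1.-tuple bool) := cat_tuple p.2 p.1.
have h_inj : injective h.
  move=> [a1 b1] [a2 b2] /(congr1 val) /= /eqP.
  rewrite eqseq_cat ?size_tuple // => /andP [/eqP Hb /eqP Ha].
  by congr pair; apply: val_inj.
have h_bij : bijective h.
  apply: inj_card_bij => //.
  by rewrite card_prod !card_tuple card_bool expnD mulnC.
by rewrite (reindex h) //; exact: onW_bij.
Qed.

Lemma exists_le_of_sum_le (T : finType) (f g : T -> nat) :
  0 < #|T| -> \sum_t f t <= \sum_t g t -> exists t, f t <= g t.
Proof.
move=> HT Hsum; apply/existsP; apply: contraLR Hsum => /existsPn Hlt.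
have : \sum_t (g t + 1) <= \sum_t f t.
  by apply: leq_sum => t _; rewrite addn1 ltnNge Hlt.
rewrite big_split sum1_card /= -ltnNge => H; apply: leq_trans H.
by rewrite -addn1 leq_add2l.
Qed.

Lemma INR_expn (a k : nat) : INR (a ^ k) = (INR a ^ k)%R.
Proof. by elim: k => // k IH; rewrite expnS mult_INR IH. Qed.

Lemma advantage_count (N c s A B : nat) : 0 < s ->
  (/ INR s <= INR A / 2 ^ (N + c) - INR B / 2 ^ N)%R <->
  2 ^ (N + c) + s * B * 2 ^ c <= s * A.
Proof.
move=> s_gt0.
have Hs : (0 < INR s)%R by apply: lt_0_INR; apply/ltP.
have HN : (0 < 2 ^ N)%R by apply: pow_lt; lra.
have Hc : (0 < 2 ^ c)%R by apply: pow_lt; lra.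
set k := (INR s * 2 ^ N * 2 ^ c)%R.
have Hk : (0 < k)%R by rewrite /k; do 2 apply: Rmult_lt_0_compat => //.
have lhsE : (k * / INR s = 2 ^ N * 2 ^ c)%R by rewrite /k; field; lra.
have rhsE : (k * (INR A / 2 ^ (N + c) - INR B / 2 ^ N) =
             INR s * INR A - INR s * INR B * 2 ^ c)%R.
  by rewrite /k pow_add; field; lra.
have natE : (INR (2 ^ (N + c) + s * B * 2 ^ c) <= INR (s * A) <->
             2 ^ N * 2 ^ c + INR s * INR B * 2 ^ c <= INR s * INR A)%R.
  by rewrite plus_INR !mult_INR !INR_expn pow_add.
split=> [Hadv | /leP /le_INR /natE Hcount].
  apply/leP/INR_le/natE.
  have := Rmult_le_compat_l k _ _ (Rlt_le _ _ Hk) Hadv.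
  rewrite lhsE rhsE; lra.
apply: (Rmult_le_reg_l k) => //; rewrite lhsE rhsE; lra.
Qed.

Lemma Pr_rand_count (N : nat) (D : ndcircuit) :
  Pr_rand N D = (INR (count_rand N D) / 2 ^ N)%R.
Proof. exact: prob_count. Qed.

Lemma Pr_gen_count (l : nat -> nat) (g : genfam l) (m : nat) (D : ndcircuit) :
  Pr_gen g m D = (INR (count_gen g m D) / 2 ^ m)%R.
Proof. exact: prob_count. Qed.

Lemma Pr_gen_eq0 (l : nat -> nat) (g : genfam l) (m : nat) (D : ndcircuit) :
  Pr_gen g m D = 0%R <-> count_gen g m D = 0.
Proof.
have Hm : (0 < 2 ^ m)%R by apply: pow_lt; lra.
rewrite Pr_gen_count; split=> [H | ->]; last by rewrite /= /Rdiv Rmult_0_l.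
apply: INR_eq; rewrite /=; apply: (Rmult_eq_reg_r (/ 2 ^ m)); last first.
  by apply: Rinv_neq_0_compat; lra.
by rewrite Rmult_0_l.
Qed.

Lemma Rinv_INR_le (s s' : nat) : 0 < s -> s <= s' -> (/ INR s' <= / INR s)%R.
Proof.
by move=> Hs Hss; apply: Rinv_le_contravar; [apply: lt_0_INR; apply/ltP | apply: le_INR; apply/leP].
Qed.

(** * From [G] at length [n] to [g] at length [m] *)

Section Restriction.
(* [genfam] is a product type: keep [n] an explicit argument of [g] and [G]. *)
Local Unset Implicit Arguments.
Variables (c n m : nat) (g G : genfam (fun n => n + c)).
Hypothesis m_le_n : m <= n.
Hypothesis G_restricts :
  forall x : n.-tuple bool, val (G n x) = val (g m (prefix_tuple m x)) ++ drop m x.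
Local Set Implicit Arguments.

Lemma count_rand_split (D : ndcircuit) :
  count_rand (n + c) D =
  \sum_(z : (n - m).-tuple bool) count_rand (m + c) (fix_suffix D (m + c) z).
Proof.
rewrite /count_rand; move: (n - m) (subnKC m_le_n) => k <-.
rewrite -addnA [k + c]addnC addnA (sum_cat_tuple _ _ (fun y => nd_accepts D y)).
apply: eq_bigr => z _; apply: eq_bigr => y _.
by rewrite fix_suffix_accepts // size_tuple.
Qed.

Lemma count_gen_split (D : ndcircuit) :
  count_gen G n D =
  \sum_(z : (n - m).-tuple bool) count_gen g m (fix_suffix D (m + c) z).
Proof.
pose F (s : seq bool) : nat :=
  nd_accepts D (val (g m (seq_prefix m s)) ++ drop m s).
rewrite /count_gen (eq_bigr (fun x => F (val x))); last by move=> x _; rewrite G_restricts.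
move: (n - m) (subnKC m_le_n) => k Ek; rewrite -Ek (sum_cat_tuple _ _ F).
apply: eq_bigr => z _; apply: eq_bigr => x1 _.
by rewrite /F seq_prefix_cat fix_suffix_accepts ?size_tuple // drop_size_cat ?size_tuple.
Qed.

Lemma restriction_keeps_advantage (s : nat) (D : ndcircuit) :
  2 ^ (n + c) + s * count_gen G n D * 2 ^ c <= s * count_rand (n + c) D ->
  exists z : (n - m).-tuple bool,
    2 ^ (m + c) + s * count_gen g m (fix_suffix D (m + c) z) * 2 ^ c
      <= s * count_rand (m + c) (fix_suffix D (m + c) z).
Proof.
rewrite count_rand_split count_gen_split => Hadv.
apply: exists_le_of_sum_le; first by rewrite card_tuple card_bool expn_gt0.
rewrite big_split /= sum_nat_const card_tuple card_bool -expnD addnA subnK //.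
by rewrite -big_distrl -!big_distrr.
Qed.

Lemma nh_hard_of_restriction (T T' : R) :
  nh_hard_ge g m T' ->
  (forall s, 0 < s -> (T' <= INR (s + (2 * (n - m)).+1))%R -> (T <= INR s)%R) ->
  nh_hard_ge G n T.
Proof.
move=> g_hard transfer s D s_gt0 D_size Hadv; apply: transfer => //.
move: Hadv; rewrite Pr_rand_count Pr_gen_count advantage_count //.
move=> /restriction_keeps_advantage [z Hz].
apply: (g_hard _ (fix_suffix D (m + c) z)); first by rewrite addnS.
  by rewrite (leq_trans (fix_suffix_size _ _ _)) // size_tuple leq_add2r.
rewrite Pr_rand_count Pr_gen_count.
apply: Rle_trans (proj2 (advantage_count _ _ _ _ s_gt0) Hz).
by apply: Rinv_INR_le; rewrite ?leq_addr.
Qed.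

Lemma dh_hard_of_restriction (T T' : R) :
  dh_hard_ge g m T' ->
  (forall s, 0 < s -> (T' <= INR (s + (2 * (n - m)).+1))%R -> (T <= INR s)%R) ->
  dh_hard_ge G n T.
Proof.
move=> g_hard transfer s D s_gt0 D_size Hrand /Pr_gen_eq0 Hgen.
apply: transfer => //.
have Hadv : (/ INR s <= Pr_rand (n + c) D - Pr_gen G n D)%R.
  by rewrite (Pr_gen_count G) Hgen /= /Rdiv Rmult_0_l Rminus_0_r.
move: Hadv; rewrite Pr_rand_count Pr_gen_count advantage_count //.
move=> /restriction_keeps_advantage [z Hz].
have Hgen_z : count_gen g m (fix_suffix D (m + c) z) = 0.
  by move: Hgen; rewrite count_gen_split => /eqP; rewrite sum_nat_eq0 => /forallP /(_ z) /eqP.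
apply: (g_hard _ (fix_suffix D (m + c) z)); first by rewrite addnS.
- by rewrite (leq_trans (fix_suffix_size _ _ _)) // size_tuple leq_add2r.
- apply: Rle_trans (Rinv_INR_le s_gt0 (leq_addr _ _)) _.
  move: Hz; rewrite -advantage_count // Hgen_z Pr_rand_count.
  by rewrite /= /Rdiv Rmult_0_l Rminus_0_r.
- exact/Pr_gen_eq0.
Qed.

End Restriction.

(* [peval] is stated with [Nat.pow]; switch to ssrnat's [expn]. *)
Lemma peval_expn (p : seq nat) (n : nat) :
  peval p n = \sum_(i < size p) nth 0 p i * n ^ i.
Proof.
apply: eq_bigr => i _; congr (_ * _).
by elim: (nat_of_ord i) => // e IH; rewrite expnS /= IH.
Qed.

Lemma leq_exp_base (a b k : nat) : a <= b -> a ^ k <= b ^ k.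
Proof. by move=> Hab; case: k => // k; rewrite leq_exp2r. Qed.

Lemma peval_mono (p : seq nat) : {homo peval p : a b / a <= b}.
Proof.
move=> a b Hab; rewrite !peval_expn; apply: leq_sum => i _.
by rewrite leq_mul2l leq_exp_base ?orbT.
Qed.

Lemma peval_bound (p : seq nat) (m : nat) :
  peval p m <= (\sum_(i < size p) nth 0 p i) * m.+1 ^ size p.
Proof.
rewrite peval_expn big_distrl /=; apply: leq_sum => i _; rewrite leq_mul2l.
apply/orP; right; apply: leq_trans (leq_pexp2l _ (ltnW (ltn_ord i))) => //.
exact/leq_exp_base/leqnSn.
Qed.

(* For [m >= 1], [p(m) <= K' m^(d+1)] with [K' = K 2^d + 1]; the exponent
   [d + 1] is positive even for the zero polynomial. *)
Lemma peval_le_monomial (p : seq nat) (m : nat) : 0 < m ->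
  peval p m <= ((\sum_(i < size p) nth 0 p i) * 2 ^ size p).+1 * m ^ (size p).+1.
Proof.
move=> m_gt0; apply: leq_trans (peval_bound p m) _.
rewrite mulSn -mulnA; apply: leq_trans (leq_addl _ _) ; rewrite leq_mul2l.
apply/orP; right.
have base : m.+1 <= 2 * m by rewrite mul2n -addnn -add1n leq_add2r.
apply: (@leq_trans ((2 * m) ^ size p)); first exact: leq_exp_base.
by rewrite expnMn leq_mul2l expnS leq_pmull ?orbT.
Qed.

(** * The padded generator [G]

   For [ns i <= n < ns (i+1)], [G_n(x) = g_(ns i)(x[1..ns i]) ++ x[ns i+1..n]];
   below [ns 0] (where nothing is claimed) [G] pads [x] with zeros. *)

Section Construction.
Local Unset Implicit Arguments.
Variables (c : nat) (g : genfam (fun n => n + c)) (ns : nat -> nat).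
Hypothesis ns_inc : forall i, ns i < ns i.+1.
Local Set Implicit Arguments.

Lemma ns_mono : {homo ns : i j / i <= j}.
Proof. by apply: homo_leq => [//|j i k|i]; [apply: leq_trans | apply: ltnW]. Qed.

Lemma ns_ge (i : nat) : i <= ns i.
Proof. by elim: i => // i IH; apply: leq_trans (ns_inc i). Qed.

Definition stage (n : nat) : nat := \max_(i < n.+1 | ns i <= n) i.

Lemma stage_eq (i n : nat) : ns i <= n < ns i.+1 -> stage n = i.
Proof.
move=> /andP [Hlo Hhi].
have Hi : i < n.+1 by rewrite ltnS (leq_trans (ns_ge i) Hlo).
apply/eqP; rewrite eqn_leq; apply/andP; split; last first.
  exact: (leq_bigmax_cond (Ordinal Hi) Hlo).
apply/bigmax_leqP => j Hj; rewrite leqNgt; apply/negP => /ns_mono Hij.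
by move: (leq_ltn_trans Hj Hhi); rewrite ltnNge Hij.
Qed.

Lemma stage_spec (n : nat) : ns 0 <= n -> ns (stage n) <= n < ns (stage n).+1.
Proof.
move=> H0.
have Pex : exists i, ns i <= n by exists 0.
have Pbound i : ns i <= n -> i <= n by apply: leq_trans (ns_ge i).
have [i Hi Hmax] := ex_maxnP Pex Pbound.
have Hblock : ns i <= n < ns i.+1.
  by rewrite Hi ltnNge; apply/negP => /Hmax; rewrite ltnn.
by rewrite (stage_eq Hblock).
Qed.

Definition padded_gen : genfam (fun n => n + c) := fun n x =>
  seq_prefix (n + c)
    (if ns 0 <= n then
       val (g (ns (stage n)) (prefix_tuple (ns (stage n)) x)) ++ drop (ns (stage n)) x
     else x ++ nseq c false).
Arguments padded_gen : clear implicits.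

Lemma padded_gen_val (i n : nat) (x : n.-tuple bool) : ns i <= n < ns i.+1 ->
  val (padded_gen n x) = val (g (ns i) (prefix_tuple (ns i) x)) ++ drop (ns i) x.
Proof.
move=> Hblock; have Hlo : ns i <= n by case/andP: Hblock.
have H0 : ns 0 <= n by apply: leq_trans (ns_mono (leq0n i)) Hlo.
rewrite /padded_gen H0 (stage_eq Hblock) val_seq_prefix //.
by rewrite size_cat size_drop !size_tuple addnAC subnKC.
Qed.

Lemma padded_gen_val_small (n : nat) (x : n.-tuple bool) : n < ns 0 ->
  val (padded_gen n x) = val x ++ nseq c false.
Proof.
move=> H; rewrite /padded_gen ifN -?ltnNge // val_seq_prefix //.
by rewrite size_cat size_tuple size_nseq.
Qed.

(* [G] has circuits of the same polynomial size as [g]: on a block it is a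
   circuit for [g_(ns i)] run on the prefix, with [ns i <= n]. *)
Lemma padded_gen_is_generator : is_generator g -> is_generator padded_gen.
Proof.
move=> [l_gt [q gen_circ]]; split=> //; exists q => n.
have [Hsmall|H0] := ltnP n (ns 0).
  have [C [C_size C_val]] := padding_circuit n c.
  exists C; rewrite /mc_size in C_size *; rewrite C_size; split=> // x.
  by rewrite C_val padded_gen_val_small.
have /andP [Hlo _] := stage_spec H0; set m := ns (stage n) in Hlo.
have [C [C_size C_val]] := gen_circ m.
have [C' [C'_size C'_val]] := prefix_circuit C Hlo.
exists C'; split; first by rewrite C'_size (leq_trans C_size) ?peval_mono.
by move=> x; rewrite C'_val C_val (padded_gen_val x (stage_spec H0)).
Qed.

End Construction.

(** * Analytic estimates

   If [2^(x^e) <= s + 2y + 1] with [y] polynomial in [x] of degree [D],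
   then [2^(y^(e / 2D)) <= s] for large [x]: the exponent [y^(e/2D)] is
   about [x^(e/2)], which together with [ln y = O(ln x) = O(x^(e/2))] is
   negligible against [x^e]. *)

Local Open Scope R_scope.

Lemma exp_le_mono (a b : R) : a <= b -> exp a <= exp b.
Proof. by move=> [H|->]; [left; exact: exp_increasing | right]. Qed.

Lemma ln_le_mono (a b : R) : 0 < a -> a <= b -> ln a <= ln b.
Proof. by move=> Ha [H|->]; [left; exact: ln_increasing | right]. Qed.

(* From [1 + u <= exp u] with [u = e ln x]. *)
Lemma ln_le_Rpower (e x : R) : e * ln x <= Rpower x e.
Proof. rewrite /Rpower; have := exp_ineq1_le (e * ln x); lra. Qed.

Lemma Rpower2_mul_le (u v w : R) :
  0 < v -> u * ln 2 + ln v <= w * ln 2 -> Rpower 2 u * v <= Rpower 2 w.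
Proof.
move=> Hv H; rewrite /Rpower -{1}(exp_ln v Hv) -exp_plus.
by apply: exp_le_mono; lra.
Qed.

Lemma affine_le_square (a b k t : R) : 0 <= a -> 0 <= b -> 0 < k ->
  (a + b) / k + 1 <= t -> a * t + b <= k * (t * t).
Proof.
move=> Ha Hb Hk; set q := (a + b) / k => Ht.
have Hq : 0 <= q by apply: Rmult_le_pos; [lra | apply/Rlt_le/Rinv_0_lt_compat].
have Hab : a + b = k * q by rewrite /q; field; apply: Rgt_not_eq.
have H1 : a * t + b <= (a + b) * t by nra.
have H2 : (a + b) * t <= k * (t * t).
  rewrite Hab Rmult_assoc; apply: Rmult_le_compat_l; first lra.
  by apply: Rmult_le_compat_r; lra.
lra.
Qed.

Section ExponentShrinking.
Variables (e K : R) (D : nat).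
Hypotheses (e_gt0 : 0 < e) (K_ge1 : 1 <= K) (D_gt0 : (0 < D)%nat).

Definition shrunk_exponent : R := e / (2 * INR D).

Lemma INR_D_ge1 : 1 <= INR D.
Proof. by apply: (le_INR 1); apply/leP. Qed.

Lemma shrunk_exponent_gt0 : 0 < shrunk_exponent.
Proof.
by apply: Rdiv_lt_0_compat => //; have := INR_D_ge1; lra.
Qed.

Lemma shrunk_power_le (x y : R) : 0 < x -> 0 < y -> y <= K * x ^ D ->
  Rpower y shrunk_exponent <= Rpower K shrunk_exponent * Rpower x (e / 2).
Proof.
move=> Hx Hy Hyx.
have HxD : 0 < x ^ D by apply: pow_lt.
apply: Rle_trans (Rle_Rpower_l _ _ _ (Rlt_le _ _ shrunk_exponent_gt0) (conj Hy Hyx)) _.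
rewrite -Rpower_mult_distr //; last lra.
rewrite -Rpower_pow // Rpower_mult /shrunk_exponent; apply: Req_le; do 2 f_equal.
by field; have := INR_D_ge1; lra.
Qed.

Lemma log_size_le (x y : R) : 0 < x -> 1 <= y -> y <= K * x ^ D ->
  ln (2 * y + 2) <= ln (4 * K) + 2 * INR D / e * Rpower x (e / 2).
Proof.
move=> Hx Hy Hyx.
have HxD : 0 < x ^ D by apply: pow_lt.
have Hlnx : e / 2 * ln x <= Rpower x (e / 2) by apply: ln_le_Rpower.
apply: Rle_trans (ln_le_mono (b := 4 * K * x ^ D) _ _) _; [lra | nra |].
rewrite ln_mult ?ln_pow //; [|nra].
have -> : 2 * INR D / e * Rpower x (e / 2) = INR D * (2 / e * Rpower x (e / 2)).
  by field; lra.
have : ln x <= 2 / e * Rpower x (e / 2).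
  have -> : ln x = 2 / e * (e / 2 * ln x) by field; lra.
  by apply: Rmult_le_compat_l => //; apply: Rlt_le; apply: Rdiv_lt_0_compat; lra.
have := INR_D_ge1; nra.
Qed.

Lemma exponent_shrinking : exists X0, 1 <= X0 /\
  forall x y, X0 <= x -> 1 <= y -> y <= K * x ^ D ->
    Rpower 2 (Rpower y shrunk_exponent) * (2 * y + 2) <= Rpower 2 (Rpower x e).
Proof.
set a := Rpower K shrunk_exponent * ln 2 + 2 * INR D / e.
set b := ln (4 * K).
set T0 := (a + b) / ln 2 + 1.
have Hln2 : 0 < ln 2 by have := ln_lt_2; lra.
have HKe : 0 < Rpower K shrunk_exponent by apply: exp_pos.
have Ha : 0 <= a.
  have HD : 0 <= 2 * INR D / e by apply/Rlt_le/Rdiv_lt_0_compat => //; have := INR_D_ge1; lra.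
  by rewrite /a; have := Rmult_le_pos _ _ (Rlt_le _ _ HKe) (Rlt_le _ _ Hln2); lra.
have Hb : 0 <= b by rewrite /b -ln_1; apply: ln_le_mono; lra.
have HT0 : 1 <= T0.
  suff : 0 <= (a + b) / ln 2 by rewrite /T0; lra.
  by apply: Rmult_le_pos; [lra | apply/Rlt_le/Rinv_0_lt_compat].
have He2 : 0 < e / 2 by lra.
exists (Rpower T0 (2 / e)); split.
  rewrite -(Rpower_O T0); last lra.
  by apply: Rle_Rpower => //; apply/Rlt_le/Rdiv_lt_0_compat; lra.
move=> x y Hx Hy Hyx.
have Hx0 : 0 < x by apply: Rlt_le_trans Hx; apply: exp_pos.
set t := Rpower x (e / 2).
have Ht : T0 <= t.
  have -> : T0 = Rpower (Rpower T0 (2 / e)) (e / 2).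
    by rewrite Rpower_mult -[LHS]Rpower_1; [congr Rpower; field | ]; lra.
  by apply: Rle_Rpower_l; [lra | split; first exact: exp_pos].
have Hxe : Rpower x e = t * t.
  by rewrite /t -Rpower_plus; congr Rpower; field.
have Hpow := shrunk_power_le Hx0 (Rlt_le_trans _ _ _ Rlt_0_1 Hy) Hyx.
have Hlog := log_size_le Hx0 Hy Hyx.
have Hsq := affine_le_square Ha Hb Hln2 Ht.
rewrite -/t -/b in Hpow Hlog.
have Hpow2 : Rpower y shrunk_exponent * ln 2 <= Rpower K shrunk_exponent * t * ln 2.
  by apply: Rmult_le_compat_r; lra.
have Hat : a * t = Rpower K shrunk_exponent * t * ln 2 + 2 * INR D / e * t.
  by rewrite /a; ring.
apply: Rpower2_mul_le; first lra.
rewrite Hxe; lra.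
Qed.

Lemma hardness_shrinking : exists X0, 1 <= X0 /\
  forall x y s, X0 <= x -> 1 <= y -> y <= K * x ^ D ->
    Rpower 2 (Rpower x e) <= s + 2 * y + 1 -> Rpower 2 (Rpower y shrunk_exponent) <= s.
Proof.
have [X0 [HX0 Hshrink]] := exponent_shrinking.
exists X0; split => // x y s Hx Hy Hyx Hs.
have := Hshrink x y Hx Hy Hyx.
set A := Rpower 2 _ => HA.
have A_ge1 : 1 <= A.
  rewrite /A -(Rpower_O 2); last lra.
  by apply: Rle_Rpower; [lra | apply/Rlt_le/exp_pos].
have : 2 * y + 1 <= A * (2 * y + 1) by rewrite -{1}(Rmult_1_l (2 * y + 1)); apply: Rmult_le_compat_r; lra.
lra.
Qed.

End ExponentShrinking.

Lemma hardness_transfer (eps : R) (p : seq nat) : 0 < eps ->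
  exists eps', 0 < eps' /\ exists N : nat, forall n m s : nat,
    (N <= n)%N -> (n < peval p m)%N ->
    expbound eps m <= INR (s + (2 * (n - m)).+1) -> expbound eps' n <= INR s.
Proof.
move=> eps_gt0.
set K := \sum_(i < size p) nth 0 p i.
have K'_ge1 : 1 <= INR (K * 2 ^ size p).+1 by apply: (le_INR 1); apply/leP.
have [X0 [X0_ge1 shrink]] := hardness_shrinking eps_gt0 K'_ge1 (ltn0Sn (size p)).
exists (shrunk_exponent eps (size p).+1); split; first exact: shrunk_exponent_gt0.
have [M0 HM0] := INR_archimed 1 X0 Rlt_0_1; rewrite Rmult_1_r in HM0.
exists (K * M0 ^ size p).+1 => n m s Hn Hnm Hbound.
have m_ge_M0 : (M0 <= m)%N.
  rewrite leqNgt; apply/negP => Hm; move: (leq_trans Hn (ltnW Hnm)); apply/negP.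
  rewrite -ltnNge ltnS (leq_trans (peval_bound p m)) // leq_mul2l.
  by rewrite leq_exp_base ?orbT.
have HX0m : X0 <= INR m by apply: Rlt_le; apply: Rlt_le_trans HM0 _; apply/le_INR/leP.
have m_gt0 : (0 < m)%N by apply/ltP/INR_lt; rewrite /=; lra.
apply: (shrink (INR m) (INR n) (INR s)) => //.
- by apply: (le_INR 1); apply/leP; apply: leq_trans Hn.
- rewrite -INR_expn -mult_INR; apply/le_INR/leP.
  exact: leq_trans (ltnW Hnm) (peval_le_monomial p m_gt0).
- apply: Rle_trans Hbound _; rewrite -[2 * INR n]/(INR 2 * INR n) -mult_INR -plus_INR -S_INR.
  by apply/le_INR/leP; rewrite addnS ltnS leq_add2l leq_mul2l leq_subr orbT.
Qed.

Local Close Scope R_scope.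

Theorem lemma2p1 (c : nat) (g : genfam (fun n => n + c)) (ns : nat -> nat)
    (p : seq nat) (eps : R) :
  is_generator g ->
  (0 < eps)%R ->
  (forall i, ns i < ns i.+1) ->
  (forall i, ns i.+1 <= peval p (ns i)) ->
  ((forall i, nh_hard_ge g (ns i) (expbound eps (ns i))) ->
     exists G : genfam (fun n => n + c),
       [/\ is_generator G, super_bits G &
           forall i n (x : n.-tuple bool), ns i <= n < ns i.+1 ->
             val (G n x) = val (g (ns i) (prefix_tuple (ns i) x)) ++ drop (ns i) x])
  /\
  ((forall i, dh_hard_ge g (ns i) (expbound eps (ns i))) ->
     exists G : genfam (fun n => n + c),
       [/\ is_generator G, demi_bits G &
           forall i n (x : n.-tuple bool), ns i <= n < ns i.+1 ->
             val (G n x) = val (g (ns i) (prefix_tuple (ns i) x)) ++ drop (ns i) x]).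
Proof.
move=> g_gen eps_gt0 ns_inc ns_poly.
set G := padded_gen g ns.
have G_val := padded_gen_val g ns_inc.
have [eps' [eps'_gt0 [N transfer]]] := hardness_transfer p eps_gt0.
(* Beyond [N] and [ns 0], [n] lies in the block of [m = ns (stage n)],
   and [n < ns (stage n + 1) <= p(m)]. *)
have large n : maxn N (ns 0) <= n ->
    let m := ns (stage ns n) in
    [/\ N <= n, m <= n, n < peval p m &
        forall x : n.-tuple bool, val (G n x) = val (g m (prefix_tuple m x)) ++ drop m x].
  rewrite geq_max => /andP [HN H0]; have /andP [Hlo Hhi] := stage_spec ns_inc H0.
  by split=> // [|x]; [apply: leq_trans Hhi (ns_poly _) | apply: G_val; rewrite Hlo].
split=> g_hard; exists G; split=> //; try exact: padded_gen_is_generator;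
  exists eps'; split=> //; exists (maxn N (ns 0)) => n /large [HN Hlo Hhi G_restricts].
- by apply: (nh_hard_of_restriction Hlo G_restricts (g_hard _)) => s _; apply: transfer.
- by apply: (dh_hard_of_restriction Hlo G_restricts (g_hard _)) => s _; apply: transfer.
Qed.
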